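(* The relation $\to_{\lambda j}$ is confluent: for all $\lambda j$-terms $t,u_1,u_2$ with $t\to^*_{\lambda j}u_1$ and $t\to^*_{\lambda j}u_2$, there exists $v$ with $u_1\to^*_{\lambda j}v$ and $u_2\to^*_{\lambda j}v$.
   Context: $\lambda j$-terms are generated by $t,u::= x\mid \lambda x.t\mid t\,u\mid t[x/u]$ ($x$ ranging over variables); $\lambda x.t$ and $t[x/u]$ bind $x$ in $t$ (not in $u$), and terms are considered modulo $\alpha$-conversion. $\mathrm{fv}(t)$ is the set of free variables, $t\{x/u\}$ is capture-avoiding meta-level substitution, and $|t|_x$ is the number of free occurrences of $x$ in $t$. If $|t|_x=n\ge2$, $t_{[y]_x}$ denotes any term obtained from $t$ by replacing $k$ of the free occurrences of $x$ by a fresh variable $y$, for some $1\le k\le n-1$. ${\tt L}$ denotes a (possibly empty) list of jumps $[x_1/u_1]\dots[x_k/u_k]$. The rewriting rules, closed under all contexts, are: $({\tt dB})$ $(\lambda x.t){\tt L}\,u\to t[x/u]{\tt L}$ where no $x_i$ of ${\tt L}$ is free in $u$; $({\tt w})$ $t[x/u]\to t$ if $|t|_x=0$; $({\tt d})$ $t[x/u]\to t\{x/u\}$ if $|t|_x=1$; $({\tt c})$ $t[x/u]\to t_{[y]_x}[x/u][y/u]$ if $|t|_x\ge2$, $y$ fresh. $\to_{\lambda j}$ is the union of all four. *)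

From Stdlib Require Import Arith List Relations.
Import ListNotations.

(* Var n : de Bruijn index n;  Lam t = \x.t (binds index 0 in t);
   App t u = t u;  Jmp t u = t[x/u] (binds index 0 in t, not in u). *)
Inductive term : Type :=
| Var : nat -> term
| Lam : term -> term
| App : term -> term -> term
| Jmp : term -> term -> term.

Fixpoint lift (k c : nat) (t : term) : term :=
  match t with
  | Var n => if n <? c then Var n else Var (n + k)
  | Lam a => Lam (lift k (S c) a)
  | App a b => App (lift k c a) (lift k c b)
  | Jmp a b => Jmp (lift k (S c) a) (lift k c b)
  end.

(* subst c u t : capture-avoiding meta-level substitution t{c/u}, removing
   the binder of index c (indices > c are decremented). *)
Fixpoint subst (c : nat) (u t : term) : term :=
  match t with
  | Var n => if n <? c then Var n
             else if n =? c then lift c 0 u else Var (pred n)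
  | Lam a => Lam (subst (S c) u a)
  | App a b => App (subst c u a) (subst c u b)
  | Jmp a b => Jmp (subst (S c) u a) (subst c u b)
  end.

Fixpoint occ (c : nat) (t : term) : nat :=
  match t with
  | Var n => if n =? c then 1 else 0
  | Lam a => occ (S c) a
  | App a b => occ c a + occ c b
  | Jmp a b => occ (S c) a + occ c b
  end.

(* splitrel c t t' : t' is obtained from t by inserting a fresh binder y just
   outside x (x = index c, y = index c+1 in t', other free indices shifted),
   and replacing SOME (arbitrary) free occurrences of x by y. *)
Inductive splitrel : nat -> term -> term -> Prop :=
| sp_lt : forall c n, n < c -> splitrel c (Var n) (Var n)
| sp_keep : forall c, splitrel c (Var c) (Var c)
| sp_move : forall c, splitrel c (Var c) (Var (S c))
| sp_gt : forall c n, c < n -> splitrel c (Var n) (Var (S n))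
| sp_lam : forall c a a', splitrel (S c) a a' -> splitrel c (Lam a) (Lam a')
| sp_app : forall c a a' b b', splitrel c a a' -> splitrel c b b' ->
    splitrel c (App a b) (App a' b')
| sp_jmp : forall c a a' b b', splitrel (S c) a a' -> splitrel c b b' ->
    splitrel c (Jmp a b) (Jmp a' b').

(* t L where L = [u1; ...; uk] stands for t[x1/u1]...[xk/uk] *)
Definition jumps (t : term) (L : list term) : term :=
  fold_left (fun acc v => Jmp acc v) L t.

(* Root rules. In de Bruijn form the side condition of dB (no x_i of L free
   in u) is handled by lifting u over the k binders of L. *)
Inductive root : term -> term -> Prop :=
| r_dB : forall t L u,
    root (App (jumps (Lam t) L) u) (jumps (Jmp t (lift (length L) 0 u)) L)
| r_w : forall t u, occ 0 t = 0 -> root (Jmp t u) (subst 0 u t)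
| r_d : forall t u, occ 0 t = 1 -> root (Jmp t u) (subst 0 u t)
| r_c : forall t t' u, 2 <= occ 0 t -> splitrel 0 t t' ->
    1 <= occ 1 t' -> 1 <= occ 0 t' ->
    (* t_[y]_x [x/u] [y/u] : y is the outer binder (index 1 inside) *)
    root (Jmp t u) (Jmp (Jmp t' (lift 1 0 u)) u).

Inductive step : term -> term -> Prop :=
| s_root : forall t t', root t t' -> step t t'
| s_lam : forall t t', step t t' -> step (Lam t) (Lam t')
| s_appl : forall t t' u, step t t' -> step (App t u) (App t' u)
| s_appr : forall t u u', step u u' -> step (App t u) (App t u')
| s_jmpl : forall t t' u, step t t' -> step (Jmp t u) (Jmp t' u)
| s_jmpr : forall t u u', step u u' -> step (Jmp t u) (Jmp t u').

Definition steps : term -> term -> Prop := clos_refl_trans term step.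

From Stdlib Require Import Arith List Relations Lia.
Import ListNotations.

(* Let [jnf] map a lambda-j term to its j-normal form: every jump t[x/u] is
   executed as the meta-level substitution t{x/u}, giving a pure lambda-term.
   Three simulation facts connect lambda-j with parallel beta-reduction [par]:
   - every term reduces to its j-normal form: t ->* jnf t (a jump is executed
     by repeated contraction c, then one d or w step);
   - a lambda-j step projects to parallel beta steps: t -> t' implies
     jnf t =>* jnf t' (rules w, d, c are erased, dB becomes one beta step);
   - a parallel beta step is simulated in lambda-j: dB, then executing the jump.
   Parallel beta-reduction satisfies Takahashi's triangle property with respect
   to the complete development [dev], hence is confluent. *)

Section AbstractRewriting.

Variable A : Type.

Definition joinable (R : relation A) (a b : A) : Prop :=
  exists c, clos_refl_trans A R a c /\ clos_refl_trans A R b c.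

Definition confluent (R : relation A) : Prop :=
  forall t u1 u2, clos_refl_trans A R t u1 -> clos_refl_trans A R t u2 ->
  joinable R u1 u2.

Lemma rt_map (R S : relation A) (f : A -> A) :
  (forall a b, R a b -> S (f a) (f b)) ->
  forall a b, clos_refl_trans A R a b -> clos_refl_trans A S (f a) (f b).
Proof.
  intros Hf a b H; induction H.
  - apply rt_step; auto.
  - apply rt_refl.
  - eapply rt_trans; eauto.
Qed.

Section Triangle.

Variable par : relation A.
Variable dev : A -> A.
Hypothesis triangle : forall t t', par t t' -> par t' (dev t).

Lemma triangle_strip : forall t v, clos_refl_trans_1n A par t v ->
  forall u, par t u -> exists w, clos_refl_trans_1n A par u w /\ par v w.
Proof.
  induction 1 as [t | t t1 v Ht1 _ IH]; intros u Hu.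
  - exists u. split; [constructor | exact Hu].
  - destruct (IH (dev t)) as [w [Hdev Hvw]]; [apply triangle; exact Ht1|].
    exists w. split; [|exact Hvw].
    econstructor; [apply triangle; exact Hu | exact Hdev].
Qed.

Lemma triangle_confluent : confluent par.
Proof.
  intros t u1 u2 H1 H2.
  apply clos_rt_rt1n in H1. apply clos_rt_rt1n in H2.
  revert u2 H2. induction H1 as [t | t t1 u1 Ht1 _ IH]; intros u2 H2.
  - exists u2. split; [apply clos_rt1n_rt; exact H2 | apply rt_refl].
  - destruct (triangle_strip _ _ H2 _ Ht1) as [w [H1w H2w]].
    destruct (IH w H1w) as [v [Hu1v Hwv]].
    exists v. split; [exact Hu1v|].
    eapply rt_trans; [apply rt_step; exact H2w | exact Hwv].
Qed.

End Triangle.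

Lemma confluence_by_interpretation (step par : relation A) (J : A -> A) :
  confluent par ->
  (forall t, clos_refl_trans A step t (J t)) ->
  (forall t t', step t t' -> clos_refl_trans A par (J t) (J t')) ->
  (forall t t', par t t' -> clos_refl_trans A step t t') ->
  confluent step.
Proof.
  intros Hconf Hexp Hproj Hsim.
  assert (Hpars : forall a b, clos_refl_trans A par a b ->
            clos_refl_trans A step a b).
  { induction 1; [apply Hsim; auto | apply rt_refl | eapply rt_trans; eauto]. }
  assert (Hprojs : forall a b, clos_refl_trans A step a b ->
            clos_refl_trans A par (J a) (J b)).
  { induction 1; [apply Hproj; auto | apply rt_refl | eapply rt_trans; eauto]. }
  intros t u1 u2 H1 H2.
  destruct (Hconf _ _ _ (Hprojs _ _ H1) (Hprojs _ _ H2)) as [v [Hv1 Hv2]].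
  exists v. split.
  - eapply rt_trans; [apply Hexp | apply Hpars; exact Hv1].
  - eapply rt_trans; [apply Hexp | apply Hpars; exact Hv2].
Qed.

End AbstractRewriting.

Ltac index_cases :=
  repeat (cbn [lift subst occ pred] in *; match goal with
  | |- context [?a <? ?b] => destruct (Nat.ltb_spec a b)
  | |- context [?a =? ?b] => destruct (Nat.eqb_spec a b)
  | H : context [?a <? ?b] |- _ => destruct (Nat.ltb_spec a b)
  | H : context [?a =? ?b] |- _ => destruct (Nat.eqb_spec a b)
  end); try (exfalso; lia); try reflexivity; try (f_equal; lia).

Lemma lift_zero : forall t c, lift 0 c t = t.
Proof. induction t; intros; simpl; try index_cases; f_equal; auto. Qed.

Lemma lift_lift_merge : forall t m k i j, i <= j <= i + k ->
  lift m j (lift k i t) = lift (m + k) i t.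
Proof.
  induction t; intros; simpl.
  - index_cases.
  - f_equal; apply IHt; lia.
  - f_equal; auto.
  - f_equal; [apply IHt1 | apply IHt2]; lia.
Qed.

Lemma lift_lift_comm : forall t m k i j, i <= j ->
  lift m i (lift k j t) = lift k (j + m) (lift m i t).
Proof.
  induction t; intros; simpl.
  - index_cases.
  - f_equal; rewrite IHt by lia; f_equal.
  - f_equal; auto.
  - f_equal; [rewrite IHt1 by lia; f_equal | apply IHt2; lia].
Qed.

Lemma subst_lift_cancel : forall t u k j c, j <= c <= j + k ->
  subst c u (lift (S k) j t) = lift k j t.
Proof.
  induction t; intros; simpl.
  - index_cases.
  - f_equal; apply IHt; lia.
  - f_equal; auto.
  - f_equal; [apply IHt1 | apply IHt2]; lia.
Qed.

Lemma lift_subst_comm : forall t u k i c,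
  lift k (i + c) (subst c u t) = subst c (lift k i u) (lift k (S (i + c)) t).
Proof.
  induction t; intros; simpl.
  - destruct (Nat.ltb_spec n c); [index_cases|].
    destruct (Nat.eqb_spec n c); [|index_cases].
    subst. index_cases. rewrite (lift_lift_comm u c k 0 i) by lia. f_equal; lia.
  - f_equal. replace (S (i + c)) with (i + S c) by lia. rewrite IHt. f_equal.
  - f_equal; auto.
  - f_equal; [|auto].
    replace (S (i + c)) with (i + S c) by lia. rewrite IHt1. f_equal.
Qed.

Lemma subst_lift_comm : forall v u c i j, j <= i ->
  subst (c + i) u (lift c j v) = lift c j (subst i u v).
Proof.
  induction v; intros; simpl.
  - destruct (Nat.ltb_spec n j); [index_cases|].
    destruct (Nat.ltb_spec n i); [index_cases|].
    destruct (Nat.eqb_spec n i); [|index_cases].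
    subst. index_cases. rewrite lift_lift_merge by lia. f_equal; lia.
  - f_equal. replace (S (c + i)) with (c + S i) by lia. apply IHv. lia.
  - f_equal; auto.
  - f_equal; [|auto].
    replace (S (c + i)) with (c + S i) by lia. apply IHv1. lia.
Qed.

Lemma subst_subst_comm : forall t u v i c,
  subst (i + c) u (subst c v t) = subst c (subst i u v) (subst (S (i + c)) u t).
Proof.
  induction t; intros; simpl.
  - destruct (Nat.ltb_spec n c); [index_cases|].
    destruct (Nat.eqb_spec n c).
    + subst. index_cases. replace (i + c) with (c + i) by lia.
      apply subst_lift_comm. lia.
    + destruct (Nat.eqb_spec n (S (i + c))); [|index_cases].
      subst. index_cases. rewrite subst_lift_cancel by lia. reflexivity.
  - f_equal. replace (S (i + c)) with (i + S c) by lia. rewrite IHt. f_equal.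
  - f_equal; auto.
  - f_equal; [|auto].
    replace (S (i + c)) with (i + S c) by lia. rewrite IHt1. f_equal.
Qed.

Lemma lift_subst0 : forall t u k c,
  lift k c (subst 0 u t) = subst 0 (lift k c u) (lift k (S c) t).
Proof.
  intros. pose proof (lift_subst_comm t u k c 0) as E.
  rewrite !Nat.add_0_r in E. exact E.
Qed.

Lemma subst_subst0 : forall t u v c,
  subst c u (subst 0 v t) = subst 0 (subst c u v) (subst (S c) u t).
Proof.
  intros. pose proof (subst_subst_comm t u v c 0) as E.
  rewrite !Nat.add_0_r in E. exact E.
Qed.

Lemma occ_lift_gap : forall t k j c, j <= c < j + k -> occ c (lift k j t) = 0.
Proof.
  induction t; intros; simpl.
  - index_cases.
  - apply IHt; lia.
  - rewrite IHt1, IHt2 by lia; auto.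
  - rewrite IHt1, IHt2 by lia; auto.
Qed.

Lemma occ_subst_lifted : forall t u c,
  occ c (subst c (lift 1 0 u) t) = occ (S c) t.
Proof.
  induction t; intros; simpl.
  - destruct (Nat.ltb_spec n c); [index_cases|].
    destruct (Nat.eqb_spec n c); [|index_cases].
    subst. rewrite lift_lift_merge, occ_lift_gap by lia. index_cases.
  - auto.
  - rewrite IHt1, IHt2; auto.
  - rewrite IHt1, IHt2; auto.
Qed.

Lemma split_occ : forall c t t', splitrel c t t' ->
  occ c t' + occ (S c) t' = occ c t.
Proof. induction 1; cbn [occ]; try index_cases; lia. Qed.

Lemma split_exists : forall t c k, k <= occ c t ->
  exists t', splitrel c t t' /\ occ (S c) t' = k.
Proof.
  induction t as [n | t IH | t1 IH1 t2 IH2 | t1 IH1 t2 IH2]; intros c k Hk;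
    simpl in *.
  - destruct (Nat.lt_total n c) as [H | [H | H]].
    + exists (Var n). split; [apply sp_lt; auto | index_cases].
    + subst n. destruct k as [| [| k]].
      * exists (Var c). split; [apply sp_keep | index_cases].
      * exists (Var (S c)). split; [apply sp_move | index_cases].
      * index_cases.
    + exists (Var (S n)). split; [apply sp_gt; auto | index_cases].
  - destruct (IH (S c) k Hk) as [t' [Hs Ho]].
    exists (Lam t'). split; [constructor |]; auto.
  - destruct (IH1 c (min k (occ c t1))) as [a [Ha Hoa]]; [lia|].
    destruct (IH2 c (k - min k (occ c t1))) as [b [Hb Hob]]; [lia|].
    exists (App a b). split; [constructor; auto | simpl; lia].
  - destruct (IH1 (S c) (min k (occ (S c) t1))) as [a [Ha Hoa]]; [lia|].
    destruct (IH2 c (k - min k (occ (S c) t1))) as [b [Hb Hob]]; [lia|].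
    exists (Jmp a b). split; [constructor; auto | simpl; lia].
Qed.

Lemma subst_split : forall c t t', splitrel c t t' -> forall u,
  subst c u (subst c (lift 1 0 u) t') = subst c u t.
Proof.
  induction 1; intros u; cbn [subst lift]; try index_cases.
  - rewrite lift_lift_merge by lia. replace (c + 1) with (S c) by lia.
    rewrite subst_lift_cancel by lia. reflexivity.
  - rewrite IHsplitrel; auto.
  - rewrite IHsplitrel1, IHsplitrel2; auto.
  - rewrite IHsplitrel1, IHsplitrel2; auto.
Qed.

Lemma split_lift : forall c b b', splitrel c b b' -> forall i k, i <= c ->
  splitrel (k + c) (lift k i b) (lift k i b').
Proof.
  induction 1; intros i k Hi; cbn [lift].
  - destruct (Nat.ltb_spec n i); apply sp_lt; lia.
  - destruct (Nat.ltb_spec c i); [lia|].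
    replace (c + k) with (k + c) by lia. apply sp_keep.
  - destruct (Nat.ltb_spec c i); [lia|]. destruct (Nat.ltb_spec (S c) i); [lia|].
    replace (S c + k) with (S (k + c)) by lia.
    replace (c + k) with (k + c) by lia. apply sp_move.
  - destruct (Nat.ltb_spec n i); [lia|]. destruct (Nat.ltb_spec (S n) i); [lia|].
    replace (S n + k) with (S (n + k)) by lia. apply sp_gt. lia.
  - constructor. replace (S (k + c)) with (k + S c) by lia. apply IHsplitrel. lia.
  - constructor; auto.
  - constructor; auto.
    replace (S (k + c)) with (k + S c) by lia. apply IHsplitrel1. lia.
Qed.

Lemma split_subst : forall d a a', splitrel d a a' ->
  forall j c b b', d = S (j + c) -> splitrel c b b' ->
  splitrel (j + c) (subst j b a) (subst j b' a').
Proof.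
  induction 1; intros j c' w w' Hd Hb; subst; cbn [subst].
  - destruct (Nat.ltb_spec n j); [apply sp_lt; lia|].
    destruct (Nat.eqb_spec n j); [apply split_lift; auto; lia|].
    apply sp_lt; lia.
  - index_cases. apply sp_keep.
  - index_cases. apply sp_move.
  - index_cases. replace n with (S (pred n)) at 2 by lia. apply sp_gt. lia.
  - constructor. replace (S (j + c')) with (S j + c') by lia.
    apply IHsplitrel; auto.
  - constructor; auto.
  - constructor; [|apply IHsplitrel2; auto].
    replace (S (j + c')) with (S j + c') by lia. apply IHsplitrel1; auto.
Qed.

Lemma steps_lam : forall a a', steps a a' -> steps (Lam a) (Lam a').
Proof. apply rt_map. intros; apply s_lam; auto. Qed.

Lemma steps_app : forall a a' b b', steps a a' -> steps b b' ->
  steps (App a b) (App a' b').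
Proof.
  intros a a' b b' Ha Hb. apply rt_trans with (App a' b).
  - apply (rt_map _ step step (fun x => App x b)); auto. intros; apply s_appl; auto.
  - apply (rt_map _ step step (App a')); auto. intros; apply s_appr; auto.
Qed.

Lemma steps_jmp : forall a a' b b', steps a a' -> steps b b' ->
  steps (Jmp a b) (Jmp a' b').
Proof.
  intros a a' b b' Ha Hb. apply rt_trans with (Jmp a' b).
  - apply (rt_map _ step step (fun x => Jmp x b)); auto. intros; apply s_jmpl; auto.
  - apply (rt_map _ step step (Jmp a')); auto. intros; apply s_jmpr; auto.
Qed.

(* Executing a jump: t[x/u] ->* t{x/u}, by induction on the number of
   occurrences of x, splitting off one occurrence with rule c at a time. *)
Lemma steps_execute_jump : forall t u, steps (Jmp t u) (subst 0 u t).
Proof.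
  intros t u. remember (occ 0 t) as n eqn:Hn.
  revert t u Hn. induction n as [n IH] using lt_wf_ind; intros t u Hn.
  destruct (Nat.le_gt_cases n 1) as [Hle | Hgt].
  - apply rt_step, s_root. destruct n as [| [|]]; [apply r_w | apply r_d | lia]; auto.
  - destruct (split_exists t 0 1) as [t' [Hs Hy]]; [lia|].
    pose proof (split_occ _ _ _ Hs) as Hsum.
    eapply rt_trans; [apply rt_step, s_root, (r_c t t' u); auto; lia|].
    eapply rt_trans; [apply steps_jmp; [apply (IH (occ 0 t')) | apply rt_refl]|];
      [lia | reflexivity |].
    rewrite <- (subst_split _ _ _ Hs u).
    apply (IH (occ 0 (subst 0 (lift 1 0 u) t'))); [|reflexivity].
    rewrite occ_subst_lifted. lia.
Qed.

(* Parallel beta-reduction; jumps are inert, only redexes (\x.a) b fire. *)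
Inductive par : term -> term -> Prop :=
| p_var : forall n, par (Var n) (Var n)
| p_lam : forall a a', par a a' -> par (Lam a) (Lam a')
| p_app : forall a a' b b', par a a' -> par b b' -> par (App a b) (App a' b')
| p_jmp : forall a a' b b', par a a' -> par b b' -> par (Jmp a b) (Jmp a' b')
| p_beta : forall a a' b b', par a a' -> par b b' ->
    par (App (Lam a) b) (subst 0 b' a').

Definition pars : term -> term -> Prop := clos_refl_trans term par.

Lemma par_refl : forall t, par t t.
Proof. induction t; constructor; auto. Qed.

Lemma par_lift : forall t t', par t t' -> forall k c, par (lift k c t) (lift k c t').
Proof.
  induction 1; intros; simpl; try (constructor; auto; fail).
  - apply par_refl.
  - rewrite lift_subst0. constructor; auto.
Qed.

Lemma par_subst : forall t t', par t t' -> forall u u' c, par u u' ->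
  par (subst c u t) (subst c u' t').
Proof.
  induction 1; intros u u' c Hu; simpl; try (constructor; auto; fail).
  - destruct (n <? c); [constructor|].
    destruct (n =? c); [apply par_lift; auto | constructor].
  - rewrite subst_subst0. constructor; auto.
Qed.

Fixpoint dev (t : term) : term :=
  match t with
  | Var n => Var n
  | Lam a => Lam (dev a)
  | App (Lam a) b => subst 0 (dev b) (dev a)
  | App a b => App (dev a) (dev b)
  | Jmp a b => Jmp (dev a) (dev b)
  end.

Lemma par_triangle : forall t t', par t t' -> par t' (dev t).
Proof.
  induction 1 as [| | a a' b b' Ha IHa Hb IHb | | ]; simpl;
    try (constructor; auto; fail).
  - destruct a; try (constructor; auto; fail).
    inversion Ha; subst. simpl in IHa. inversion IHa; subst.
    constructor; auto.
  - apply par_subst; auto.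
Qed.

Lemma pars_lam : forall a a', pars a a' -> pars (Lam a) (Lam a').
Proof. apply rt_map. intros; constructor; auto. Qed.

Lemma pars_app : forall a a' b b', pars a a' -> pars b b' ->
  pars (App a b) (App a' b').
Proof.
  intros a a' b b' Ha Hb. apply rt_trans with (App a' b).
  - apply (rt_map _ par par (fun x => App x b)); auto.
    intros; constructor; auto using par_refl.
  - apply (rt_map _ par par (App a')); auto. intros; constructor; auto using par_refl.
Qed.

Lemma pars_subst : forall a a' b b' c, pars a a' -> pars b b' ->
  pars (subst c b a) (subst c b' a').
Proof.
  intros a a' b b' c Ha Hb. apply rt_trans with (subst c b a').
  - apply (rt_map _ par par (subst c b)); auto. intros; apply par_subst; auto using par_refl.
  - apply (rt_map _ par par (fun x => subst c x a')); auto.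
    intros; apply par_subst; auto using par_refl.
Qed.

(* Parallel beta is simulated in lambda-j: a beta-redex (\x.a) b is a dB
   step to a[x/b] followed by executing the jump. *)
Lemma par_simulated : forall s s', par s s' -> steps s s'.
Proof.
  induction 1.
  - apply rt_refl.
  - apply steps_lam; auto.
  - apply steps_app; auto.
  - apply steps_jmp; auto.
  - eapply rt_trans; [apply steps_app; [apply steps_lam |]; eauto|].
    eapply rt_trans; [apply rt_step, s_root, (r_dB a' [] b')|].
    simpl. rewrite lift_zero. apply steps_execute_jump.
Qed.

Fixpoint jnf (t : term) : term :=
  match t with
  | Var n => Var n
  | Lam a => Lam (jnf a)
  | App a b => App (jnf a) (jnf b)
  | Jmp a b => subst 0 (jnf b) (jnf a)
  end.

Lemma steps_jnf : forall t, steps t (jnf t).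
Proof.
  induction t; simpl.
  - apply rt_refl.
  - apply steps_lam; auto.
  - apply steps_app; auto.
  - eapply rt_trans; [apply steps_jmp; eauto | apply steps_execute_jump].
Qed.

Lemma jnf_lift : forall t k c, jnf (lift k c t) = lift k c (jnf t).
Proof.
  induction t; intros; simpl.
  - destruct (n <? c); reflexivity.
  - rewrite IHt; auto.
  - rewrite IHt1, IHt2; auto.
  - rewrite IHt1, IHt2, lift_subst0. reflexivity.
Qed.

Lemma jnf_subst : forall t u c, jnf (subst c u t) = subst c (jnf u) (jnf t).
Proof.
  induction t; intros; simpl.
  - destruct (n <? c); [reflexivity|].
    destruct (n =? c); [apply jnf_lift | reflexivity].
  - rewrite IHt; auto.
  - rewrite IHt1, IHt2; auto.
  - rewrite IHt1, IHt2, subst_subst0. reflexivity.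
Qed.

Lemma jnf_split : forall c t t', splitrel c t t' -> splitrel c (jnf t) (jnf t').
Proof.
  induction 1; simpl; try (constructor; auto; fail).
  apply (split_subst _ _ _ IHsplitrel1 0 c); auto.
Qed.

Lemma jumps_snoc : forall x L v, jumps x (L ++ [v]) = Jmp (jumps x L) v.
Proof. intros. unfold jumps. rewrite fold_left_app. reflexivity. Qed.

(* The projection of a dB step at a distance is a beta step performed under
   the substitutions coming from the list of jumps. *)
Lemma jnf_dB : forall L t u,
  pars (jnf (App (jumps (Lam t) L) u)) (jnf (jumps (Jmp t (lift (length L) 0 u)) L)).
Proof.
  induction L as [| v L IH] using rev_ind; intros t u.
  - simpl. rewrite lift_zero. apply rt_step. constructor; apply par_refl.
  - rewrite !jumps_snoc, length_app. simpl.
    specialize (IH t (lift 1 0 u)). simpl in IH.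
    rewrite lift_lift_merge in IH by lia.
    replace (App (subst 0 (jnf v) (jnf (jumps (Lam t) L))) (jnf u)) with
      (subst 0 (jnf v) (App (jnf (jumps (Lam t) L)) (jnf (lift 1 0 u)))).
    + apply pars_subst; [exact IH | apply rt_refl].
    + simpl. rewrite jnf_lift, (subst_lift_cancel _ _ 0 0 0), lift_zero by lia.
      reflexivity.
Qed.

(* Every lambda-j step projects to parallel beta steps on j-normal forms;
   the rules w, d and c are invisible after projection. *)
Lemma step_projects : forall t t', step t t' -> pars (jnf t) (jnf t').
Proof.
  induction 1 as [t t' Hroot | | | | |].
  - destruct Hroot as [| | | t t' u _ Hs _ _].
    + apply jnf_dB.
    + simpl. rewrite jnf_subst. apply rt_refl.
    + simpl. rewrite jnf_subst. apply rt_refl.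
    + simpl. rewrite jnf_lift, (subst_split _ _ _ (jnf_split _ _ _ Hs)).
      apply rt_refl.
  - simpl. apply pars_lam; auto.
  - simpl. apply pars_app; [auto | apply rt_refl].
  - simpl. apply pars_app; [apply rt_refl | auto].
  - simpl. apply pars_subst; [auto | apply rt_refl].
  - simpl. apply pars_subst; [apply rt_refl | auto].
Qed.

Theorem theorem15 : forall t u1 u2 : term,
  steps t u1 -> steps t u2 -> exists v, steps u1 v /\ steps u2 v.
Proof.
  apply (confluence_by_interpretation _ step par jnf).
  - exact (triangle_confluent _ par dev par_triangle).
  - exact steps_jnf.
  - exact step_projects.
  - exact par_simulated.
Qed.
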